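(* Let $p,q\ge0$, $m=p+q$, and let $\boldsymbol x=(x_1,\dots,x_m)$, $\boldsymbol a=(a_1,\dots,a_m)$ be indeterminates. Then $$F^{p,q}(\boldsymbol x;\boldsymbol a)=(-1)^{\binom p2+\binom q2}\prod_{i=1}^m x_i^{p-1}\cdot\det V^{p,q}(\boldsymbol x+\boldsymbol x^{-1};\boldsymbol a\boldsymbol x^{q-p})=(-1)^{\binom p2+\binom q2}\det U,$$ where $\boldsymbol x+\boldsymbol x^{-1}=(x_1+x_1^{-1},\dots,x_m+x_m^{-1})$, $\boldsymbol a\boldsymbol x^{q-p}=(a_1x_1^{q-p},\dots,a_mx_m^{q-p})$, and $U$ is the $m\times m$ matrix whose $i$-th row is $$\big(x_i^{p-1},\,x_i^{p-2}(1+x_i^2),\,\dots,\,(1+x_i^2)^{p-1},\ a_ix_i^{q-1},\,a_ix_i^{q-2}(1+x_i^2),\,\dots,\,a_i(1+x_i^2)^{q-1}\big).$$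
   Context: Partitions: a partition $\lambda=(\lambda_1\ge\lambda_2\ge\cdots)$ of nonnegative integers with finitely many nonzero parts; $l(\lambda)$ is the number of nonzero parts, $|\lambda|=\sum_i\lambda_i$. In Frobenius notation $\lambda=(\alpha_1,\dots,\alpha_d\,|\,\beta_1,\dots,\beta_d)$ where $d=\#\{i:\lambda_i\ge i\}$, $\alpha_i=\lambda_i-i$, $\beta_i=\lambda'_i-i$ ($\lambda'$ the conjugate partition). For an integer $m\ge 0$, $\mathcal{P}_m$ is the set of partitions $\lambda$ with $l(\lambda)\le m$ of the form $(\alpha_1,\dots,\alpha_d\,|\,\alpha_1+1,\dots,\alpha_d+1)$ (the empty partition included; $|\lambda|$ is then even). For nonnegative integers $p,q$, vectors $\boldsymbol{x}=(x_1,\dots,x_{p+q})$, $\boldsymbol{a}=(a_1,\dots,a_{p+q})$, and partitions $\lambda,\mu$ with $l(\lambda)\le p$, $l(\mu)\le q$, let $V^{p,q}_{\lambda,\mu}(\boldsymbol{x};\boldsymbol{a})$ be the $(p+q)\times(p+q)$ matrix whose $i$-th row is $$(x_i^{\lambda_p},x_i^{\lambda_{p-1}+1},\dots,x_i^{\lambda_1+p-1},\ a_ix_i^{\mu_q},a_ix_i^{\mu_{q-1}+1},\dots,a_ix_i^{\mu_1+q-1}),$$ and $V^{p,q}(\boldsymbol x;\boldsymbol a)=V^{p,q}_{\emptyset,\emptyset}(\boldsymbol x;\boldsymbol a)$, i.e. the matrix with $i$-th row $(1,x_i,\dots,x_i^{p-1},a_i,a_ix_i,\dots,a_ix_i^{q-1})$.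 Define $$F^{p,q}(\boldsymbol{x};\boldsymbol{a})=\sum_{\lambda\in\mathcal{P}_p,\ \mu\in\mathcal{P}_q}(-1)^{(|\lambda|+|\mu|)/2}\det V^{p,q}_{\lambda,\mu}(\boldsymbol{x};\boldsymbol{a}).$$ *)

From HB Require Import structures.
From mathcomp Require Import all_boot all_order all_algebra.
Set Implicit Arguments. Unset Strict Implicit. Unset Printing Implicit Defensive.
Import Order.TTheory GRing.Theory Num.Theory.

(* A partition lambda with l(lambda) <= p is represented by the function
   lam : 'I_p -> nat, lam i = lambda_{i+1} (0-based index). *)

Definition conjp (p : nat) (lam : 'I_p -> nat) (j : nat) : nat :=
  #|[pred i : 'I_p | j <= lam i]|.

Definition is_partition (p : nat) (lam : 'I_p -> nat) : bool :=
  [forall i : 'I_p, forall j : 'I_p, (i <= j) ==> (lam j <= lam i)].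

(* Frobenius form (alpha | alpha + 1): for every 1-based index k with
   lambda_k >= k (i.e. k <= d), beta_k = alpha_k + 1, i.e.
   lambda'_k - k = lambda_k - k + 1, i.e. lambda'_k = lambda_k + 1. *)
Definition frob_shift (p : nat) (lam : 'I_p -> nat) : bool :=
  [forall i : 'I_p, (i.+1 <= lam i) ==> (conjp lam i.+1 == (lam i).+1)].

Definition inP (p : nat) (lam : 'I_p -> nat) : bool :=
  is_partition lam && frob_shift lam.

Definition psize (p : nat) (lam : 'I_p -> nat) : nat := \sum_(i < p) lam i.

(* Every lambda in P_p has all parts < p, so P_p is exactly the set of
   {ffun 'I_p -> 'I_p} satisfying inP (used to make the sum finite). *)
Lemma inP_parts_lt (p : nat) (lam : 'I_p -> nat) :
  inP lam -> forall i : 'I_p, lam i < p.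
Proof.
case/andP=> /forallP Hpart /forallP Hfrob i.
have i0 : 0 < p by case: i => [k Hk]; apply: leq_ltn_trans Hk.
set o := Ordinal i0.
have Hle : lam i <= lam o by have := Hpart o => /forallP /(_ i) /implyP; apply.
case: (posnP (lam o)) => [Ho|Hpos].
  by move: Hle; rewrite Ho leqn0 => /eqP ->.
have := Hfrob o => /implyP /(_ Hpos) /eqP Hc.
apply: (leq_ltn_trans Hle).
by rewrite -ltnS -Hc /conjp ltnS; apply: leq_trans (max_card _) _; rewrite card_ord.
Qed.

Local Open Scope ring_scope.

Definition Vmat (R : comRingType) (p q : nat) (lam : 'I_p -> nat) (mu : 'I_q -> nat)
  (x a : 'I_(p + q) -> R) : 'M[R]_(p + q) :=
  \matrix_(i, j) match split j with
                 | inl j' => x i ^+ (lam (rev_ord j') + j')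
                 | inr k => a i * x i ^+ (mu (rev_ord k) + k)
                 end.

Definition V0 (R : comRingType) (p q : nat) (x a : 'I_(p + q) -> R) : 'M[R]_(p + q) :=
  Vmat (fun _ : 'I_p => 0%N) (fun _ : 'I_q => 0%N) x a.

Definition Ffun (R : comRingType) (p q : nat) (x a : 'I_(p + q) -> R) : R :=
  \sum_(lam : {ffun 'I_p -> 'I_p} | inP (fun i => nat_of_ord (lam i)))
   \sum_(mu : {ffun 'I_q -> 'I_q} | inP (fun i => nat_of_ord (mu i)))
     (-1) ^+ ((psize (fun i => nat_of_ord (lam i)) + psize (fun i => nat_of_ord (mu i)))./2)
     * \det (Vmat (fun i => nat_of_ord (lam i)) (fun i => nat_of_ord (mu i)) x a).

Definition Umat (R : comRingType) (p q : nat) (x a : 'I_(p + q) -> R) : 'M[R]_(p + q) :=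
  \matrix_(i, j) match split j with
                 | inl j' => x i ^+ (p - 1 - j') * (1 + x i ^+ 2) ^+ j'
                 | inr k => a i * x i ^+ (q - 1 - k) * (1 + x i ^+ 2) ^+ k
                 end.

(* With the other block of columns held fixed, det V_{lambda,mu} is an alternating
   multilinear functional Phi of the columns y ^ (lambda_{n-j} + j), so both sums in F^{p,q}
   reduce to the identity
     sum_{lambda in P_n} (-1)^{|lambda|/2} Phi (y ^ (lambda_{n-j} + j))
       = (-1)^{C(n,2)} Phi (y ^ (n-1-j) (1 + y^2) ^ j),
   valid for every such Phi.  It is proved by induction on n: P_{n+1} is the disjoint union
   of the partitions of P_n with a zero part appended and of those with the hook (n-1 | n)
   added in front.  The two partitions coming from mu contribute, up to the common sign
   (-1)^n, Phi at the columns y * y ^ (mu_{n-j} + j) completed by the column 1 + y^(2n),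
   and 1 + y^(2n) differs from (1 + y^2)^n by a combination of the columns
   y ^ (n-j) (1 + y^2) ^ j, j < n.  Finally x (x + 1/x) = 1 + x^2 factors U as a diagonal
   matrix times V^{p,q}(x + 1/x; a x^(q-p)). *)

From mathcomp Require Import all_boot all_order all_algebra zify ring.
From Stdlib Require Import FunctionalExtensionality.
Import GRing.Theory.
Set Implicit Arguments. Unset Strict Implicit. Unset Printing Implicit Defensive.

Section FamilyUpdates.
Variable T : Type.

Definition ins n (k : 'I_n.+1) (v : T) (h : 'I_n -> T) : 'I_n.+1 -> T :=
  fun j => if unlift k j is Some j' then h j' else v.

Lemma ins_at n (k : 'I_n.+1) v h : ins k v h k = v.
Proof. by rewrite /ins unlift_none. Qed.

Lemma ins_lift n (k : 'I_n.+1) v h j : ins k v h (lift k j) = h j.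
Proof. by rewrite /ins liftK. Qed.

Lemma ins_eta n (k : 'I_n.+1) (f : 'I_n.+1 -> T) : f = ins k (f k) (f \o lift k).
Proof.
by apply: functional_extensionality => j; rewrite /ins; case: unliftP => [j'|] ->.
Qed.

Definition upd n (f : 'I_n -> T) (k : 'I_n) (v : T) : 'I_n -> T :=
  fun j => if j == k then v else f j.

Lemma upd_at n (f : 'I_n -> T) k v : upd f k v k = v.
Proof. by rewrite /upd eqxx. Qed.

Lemma upd_out n (f : 'I_n -> T) k v j : j != k -> upd f k v j = f j.
Proof. by rewrite /upd => /negPf ->. Qed.

Lemma upd_id n (f : 'I_n -> T) k : upd f k (f k) = f.
Proof. by apply: functional_extensionality => j; rewrite /upd; case: eqP => // ->. Qed.

Lemma upd_comm n (f : 'I_n -> T) i j v w :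
  i != j -> upd (upd f i v) j w = upd (upd f j w) i v.
Proof.
move=> ij; apply: functional_extensionality => k; rewrite /upd.
by case: (eqVneq k j) => [->|//]; rewrite eq_sym (negPf ij).
Qed.

Lemma ins_upd n (k : 'I_n.+1) v w h : ins k v h = upd (ins k w h) k v.
Proof.
apply: functional_extensionality => j; case: (eqVneq j k) => [->|jk].
  by rewrite upd_at ins_at.
by rewrite upd_out //; case: (unliftP k j) jk => [j'|] ->; rewrite ?eqxx // !ins_lift.
Qed.

(* Inserting at position k + 1 instead of k swaps the entries at k and k + 1. *)
Lemma ins_liftS n (k : 'I_n) v h (a := lift ord_max k) (b := lift ord0 k)
    (f := ins a v h) :
  ins b v h = upd (upd f a (f b)) b (f a).
Proof.
rewrite /f {f}; have a_val : a = k :> nat := lift_max k.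
have b_val : b = k.+1 :> nat := lift0 k.
clearbody a b.
have lift_ak : lift a k = b by apply: val_inj; rewrite /= /bump a_val b_val leqnn.
have lift_bk : lift b k = a by apply: val_inj; rewrite /= /bump a_val b_val ltnn.
rewrite ins_at -[in ins a v h b]lift_ak ins_lift.
apply: functional_extensionality => j; case: (eqVneq j b) => [->|jb].
  by rewrite upd_at ins_at.
rewrite upd_out //; case: (eqVneq j a) => [->|ja]; first by rewrite upd_at -lift_bk ins_lift.
rewrite upd_out //; case: (unliftP a j) ja jb => [j'|->]; last by rewrite eqxx.
move=> -> _ ajb; have j'k : j' != k by apply: contraNneq ajb => ->; rewrite lift_ak.
rewrite [RHS]ins_lift (_ : lift a j' = lift b j') ?ins_lift //.
apply: val_inj; rewrite /= /bump a_val b_val.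
by move: j'k; rewrite -val_eqE /=; case: leqP; case: leqP; lia.
Qed.

End FamilyUpdates.

(** * The partitions P_n *)

Section Partitions.

Lemma conjpE n (lam : 'I_n -> nat) j : conjp lam j = \sum_(i < n) (j <= lam i).
Proof.
rewrite /conjp -sum1_card big_mkcond /=; apply: eq_bigr => i _.
by rewrite inE; case: leqP.
Qed.

Lemma conjp0 n (lam : 'I_n -> nat) : conjp lam 0 = n.
Proof. by rewrite conjpE (eq_bigr (fun _ => 1)) // sum1_card card_ord. Qed.

Lemma conjp1_full n (lam : 'I_n -> nat) : conjp lam 1 = n -> forall i, 0 < lam i.
Proof.
move=> full i; have /card0_eq/(_ i) : #|[predC [pred i | 0 < lam i]]| = 0.
  by apply/eqP; rewrite -(eqn_add2l (conjp lam 1)) cardC card_ord {1}full addn0.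
by rewrite !inE => /negbFE.
Qed.

Lemma is_partitionP n (lam : 'I_n -> nat) :
  reflect (forall i j : 'I_n, i <= j -> lam j <= lam i) (is_partition lam).
Proof.
apply: (iffP forallP) => [H i j|H i]; first by move/forallP/(_ j)/implyP: (H i).
by apply/forallP => j; apply/implyP/H.
Qed.

Lemma frob_shiftP n (lam : 'I_n -> nat) :
  reflect (forall i : 'I_n, i.+1 <= lam i -> conjp lam i.+1 = (lam i).+1)
          (frob_shift lam).
Proof.
apply: (iffP forallP) => [H i /(implyP (H i))/eqP //|H i].
by apply/implyP => /H ->.
Qed.

Definition padp n (mu : 'I_n -> nat) : 'I_n.+1 -> nat := ins ord_max 0 mu.

(* In Frobenius notation, hookp (alpha | beta) = (n - 1, alpha | n, beta). *)
Definition hookp n (mu : 'I_n -> nat) : 'I_n.+1 -> nat := ins ord0 n (succn \o mu).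

Lemma padpK n : cancel (@padp n) (fun lam => lam \o lift ord_max).
Proof. by move=> mu; apply: functional_extensionality => i; rewrite /= /padp ins_lift. Qed.

Lemma hookpK n : cancel (@hookp n) (fun lam => predn \o lam \o lift ord0).
Proof. by move=> mu; apply: functional_extensionality => i; rewrite /= /hookp ins_lift. Qed.

Lemma conjp_padp n (mu : 'I_n -> nat) j : 0 < j -> conjp (padp mu) j = conjp mu j.
Proof.
move=> j_gt0; rewrite !conjpE (bigD1_ord ord_max) //= /padp ins_at leqNgt j_gt0.
by under eq_bigr do rewrite ins_lift.
Qed.

Lemma conjp_hookp n (mu : 'I_n -> nat) j :
  conjp (hookp mu) j.+1 = (j < n) + conjp mu j.
Proof.
by rewrite !conjpE big_ord_recl /hookp ins_at; under eq_bigr do rewrite ins_lift.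
Qed.

Lemma inP_padp n (mu : 'I_n -> nat) : inP (padp mu) = inP mu.
Proof.
rewrite /padp; apply/andP/andP => -[/is_partitionP P /frob_shiftP F]; split.
- apply/is_partitionP => i j ij; have := P (lift ord_max i) (lift ord_max j).
  by rewrite !ins_lift !lift_max; apply.
- apply/frob_shiftP => i; have := F (lift ord_max i).
  by rewrite ins_lift lift_max conjp_padp.
- apply/is_partitionP => i j; case: (unliftP ord_max j) => [j'|] ->; last by rewrite ins_at.
  case: (unliftP ord_max i) => [i'|] -> ij; rewrite ins_lift.
    by rewrite ins_lift; apply: P; rewrite -(lift_max i') -(lift_max j').
  by move: ij; rewrite lift_max leqNgt ltn_ord.
- apply/frob_shiftP => i; case: (unliftP ord_max i) => [i'|] ->; last by rewrite ins_at.
  by rewrite ins_lift lift_max conjp_padp // => /F.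
Qed.

Lemma inP_hookp n (mu : 'I_n -> nat) : inP (hookp mu) = inP mu.
Proof.
rewrite /hookp; apply/idP/idP => [/andP [/is_partitionP P /frob_shiftP F]|mu_P].
  apply/andP; split.
    apply/is_partitionP => i j ij; have := P (lift ord0 i) (lift ord0 j).
    by rewrite !ins_lift !lift0 ltnS; apply.
  apply/frob_shiftP => i i_le; have := F (lift ord0 i).
  have mu_lt : mu i < n by have := P ord0 (lift ord0 i); rewrite ins_at ins_lift; apply.
  rewrite ins_lift lift0 conjp_hookp /= ltnS i_le (leq_ltn_trans i_le mu_lt).
  by move=> /(_ isT); rewrite add1n => -[].
have mu_lt := inP_parts_lt mu_P; case/andP: mu_P => /is_partitionP P /frob_shiftP F.
apply/andP; split.
  apply/is_partitionP => i j; case: (unliftP ord0 j) => [j'|] -> ij.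
    case: (unliftP ord0 i) ij => [i'|] -> ij; rewrite !ins_lift ?ins_at.
      by apply: P; move: ij; rewrite !lift0.
    exact: mu_lt.
  by rewrite (_ : i = ord0) //; apply/val_inj/eqP; rewrite -leqn0.
apply/frob_shiftP => i; case: (unliftP ord0 i) => [i'|] ->.
  rewrite ins_lift lift0 conjp_hookp /= ltnS => i_le.
  by rewrite (F _ i_le) (leq_ltn_trans i_le (mu_lt i')).
by rewrite ins_at conjp_hookp conjp0 => ->.
Qed.

Lemma inP_padpE n (lam : 'I_n.+1 -> nat) :
  inP lam -> lam ord0 < n -> lam = padp (lam \o lift ord_max).
Proof.
case/andP=> /is_partitionP P /frob_shiftP F lam0_lt.
rewrite [LHS](ins_eta ord_max); congr ins.
apply/eqP; rewrite -leqn0 leqNgt; apply/negP => lam_max_gt0.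
have lam_gt0 i : 0 < lam i by exact: leq_trans lam_max_gt0 (P i ord_max (leq_ord i)).
have conjp1 : conjp lam 1 = n.+1.
  by rewrite conjpE (eq_bigr (fun _ => 1)) ?sum1_card ?card_ord // => i _; rewrite lam_gt0.
by move: (F ord0 (lam_gt0 ord0)); rewrite conjp1 => -[lam0]; rewrite -lam0 ltnn in lam0_lt.
Qed.

Lemma inP_hookpE n (lam : 'I_n.+1 -> nat) :
  inP lam -> lam ord0 = n -> lam = hookp (predn \o lam \o lift ord0).
Proof.
case/andP=> _ /frob_shiftP F lam0; rewrite [LHS](ins_eta ord0) lam0 /hookp.
congr ins; apply: functional_extensionality => i /=; rewrite prednK //.
have n_gt0 : 0 < n := leq_ltn_trans (leq0n i) (ltn_ord i).
have conjp1 : conjp lam 1 = n.+1 by rewrite (F ord0) ?lam0.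
exact: conjp1_full conjp1 _.
Qed.

Lemma psize_padp n (mu : 'I_n -> nat) : psize (padp mu) = psize mu.
Proof.
by rewrite /psize (bigD1_ord ord_max) //= /padp ins_at; under eq_bigr do rewrite ins_lift.
Qed.

Lemma psize_hookp n (mu : 'I_n -> nat) : psize (hookp mu) = psize mu + n.*2.
Proof.
rewrite /psize big_ord_recl /hookp ins_at.
under eq_bigr do rewrite ins_lift /= -addn1.
by rewrite big_split /= sum1_card card_ord -addnn addnCA addnA.
Qed.

Lemma inP_psize_even n (lam : 'I_n -> nat) : inP lam -> ~~ odd (psize lam).
Proof.
elim: n lam => [|n IH] lam lam_P; first by rewrite /psize big_ord0.
have := inP_parts_lt lam_P ord0; rewrite ltnS leq_eqVlt => /orP [/eqP lam0|lam0_lt].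
  move: (lam_P); rewrite (inP_hookpE lam_P lam0) inP_hookp psize_hookp oddD odd_double addbF.
  exact: IH.
by move: (lam_P); rewrite (inP_padpE lam_P lam0_lt) inP_padp psize_padp; apply: IH.
Qed.

End Partitions.

Section FfunPartitions.

Definition parts n (lam : {ffun 'I_n -> 'I_n}) : 'I_n -> nat := fun i => lam i.

Definition ffun_of_parts n (u : 'I_n -> nat) : {ffun 'I_n -> 'I_n} :=
  [ffun i => insubd i (u i)].

Lemma partsK n : cancel (@parts n) (@ffun_of_parts n).
Proof. by move=> lam; apply/ffunP => i; rewrite ffunE valKd. Qed.

Lemma ffun_of_partsK n (u : 'I_n -> nat) :
  (forall i, u i < n) -> parts (ffun_of_parts u) = u.
Proof.
move=> u_lt; apply: functional_extensionality => i.
by rewrite /parts ffunE insubdK //; apply: u_lt.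
Qed.

Lemma padp_lt n (mu : {ffun 'I_n -> 'I_n}) i : padp (parts mu) i < n.+1.
Proof.
case: (unliftP ord_max i) => [i'|] ->; rewrite /padp ?ins_at // ins_lift.
exact: ltnW (ltn_ord _).
Qed.

Lemma hookp_lt n (mu : {ffun 'I_n -> 'I_n}) i : hookp (parts mu) i < n.+1.
Proof.
case: (unliftP ord0 i) => [i'|] ->; rewrite /hookp ?ins_at // ins_lift ltnS.
exact: ltn_ord.
Qed.

Lemma big_inP_split (V : nmodType) n (G : ('I_n.+2 -> nat) -> V) :
  (\sum_(lam : {ffun 'I_n.+2 -> 'I_n.+2} | inP (parts lam)) G (parts lam) =
   \sum_(mu : {ffun 'I_n.+1 -> 'I_n.+1} | inP (parts mu))
     (G (padp (parts mu)) + G (hookp (parts mu))))%R.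
Proof.
rewrite big_split (bigID (fun lam => parts lam ord0 == n.+1)) /= addrC.
have ord0_lift : (ord0 : 'I_n.+2) = lift ord_max ord0 by exact: val_inj.
congr (_ + _)%R.
  rewrite (reindex_onto (fun mu => ffun_of_parts (padp (parts mu)))
                        (fun lam => ffun_of_parts (parts lam \o lift ord_max))) /=.
    apply: eq_big => mu; last by rewrite ffun_of_partsK //; apply: padp_lt.
    rewrite ffun_of_partsK; last exact: padp_lt.
    rewrite inP_padp padpK partsK eqxx andbT ord0_lift /padp ins_lift.
    by rewrite (ltn_eqF (ltn_ord _)) andbT.
  move=> lam /andP [lam_P lam0_ne].
  have lam0_lt : parts lam ord0 < n.+1 by rewrite ltn_neqAle lam0_ne -ltnS ltn_ord.
  have [/is_partitionP lam_dec _] := andP lam_P.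
  rewrite ffun_of_partsK => [|i]; last exact: leq_ltn_trans (lam_dec ord0 _ _) lam0_lt.
  by rewrite -(inP_padpE lam_P lam0_lt) partsK.
rewrite (reindex_onto (fun mu => ffun_of_parts (hookp (parts mu)))
                      (fun lam => ffun_of_parts (predn \o parts lam \o lift ord0))) /=.
  apply: eq_big => mu; last by rewrite ffun_of_partsK //; apply: hookp_lt.
  rewrite ffun_of_partsK; last exact: hookp_lt.
  by rewrite inP_hookp hookpK partsK eqxx andbT /hookp ins_at eqxx andbT.
move=> lam /andP [lam_P /eqP lam0].
rewrite ffun_of_partsK => [|i]; last first.
  by have := ltn_ord (lam (lift ord0 i)); rewrite /parts /=; lia.
by rewrite -(inP_hookpE lam_P lam0) partsK.
Qed.

Lemma big_inP_le1 (V : nmodType) n (G : ('I_n -> nat) -> V) : n <= 1 ->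
  (\sum_(lam : {ffun 'I_n -> 'I_n} | inP (parts lam)) G (parts lam) = G (fun=> 0))%R.
Proof.
move=> n_le1; have parts0 (lam : {ffun 'I_n -> 'I_n}) : parts lam = fun=> 0.
  by apply: functional_extensionality => i; have := ltn_ord (lam i); rewrite /parts; lia.
have inP0 : inP (fun _ : 'I_n => 0).
  by apply/andP; split; apply/forallP => i //; apply/forallP => j; rewrite implybT.
rewrite (eq_bigl (pred1 [ffun i => i])) => [|lam]; first by rewrite big_pred1_eq parts0.
rewrite /= parts0 inP0; apply/esym/eqP/(can_inj (@partsK n)).
by rewrite !parts0.
Qed.

End FfunPartitions.

Local Open Scope ring_scope.

(** * Alternating multilinear functionals of columns *)

Section AlternatingForms.
Variable R : comPzRingType.

(* A family f : 'I_n -> R -> R stands for n matrix columns, column k having the entry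
   f k (x i) in row i. *)
Record alt_form n (Phi : ('I_n -> R -> R) -> R) : Prop := AltForm {
  alt_formZD : forall f k c (v w : R -> R),
    Phi (upd f k (fun y => c * v y + w y)) = c * Phi (upd f k v) + Phi (upd f k w);
  alt_form_eq0 : forall f i j, i != j -> f i = f j -> Phi f = 0 }.

Section AltFormTheory.
Variables (n : nat) (Phi : ('I_n -> R -> R) -> R).
Hypothesis PhiA : alt_form Phi.

Lemma alt_formD f k v w :
  Phi (upd f k (fun y => v y + w y)) = Phi (upd f k v) + Phi (upd f k w).
Proof.
rewrite -[Phi (upd f k v)]mul1r -(alt_formZD PhiA).
by congr (Phi (upd _ _ _)); apply: functional_extensionality => y; rewrite mul1r.
Qed.

Lemma alt_form_swap f i j : i != j -> Phi (upd (upd f i (f j)) j (f i)) = - Phi f.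
Proof.
move=> ij; pose F u v := Phi (upd (upd f i u) j v).
have F_diag u : F u u = 0.
  by apply: (alt_form_eq0 PhiA ij); rewrite upd_at upd_out ?upd_at // eq_sym.
have FDl u v w : F (fun y => v y + w y) u = F v u + F w u.
  by rewrite /F !(upd_comm _ _ _ ij) alt_formD.
have FDr u v w : F u (fun y => v y + w y) = F u v + F u w by rewrite /F alt_formD.
have /eqP := F_diag (fun y => f i y + f j y).
rewrite FDl !FDr !F_diag add0r addr0 addr_eq0 => /eqP F_anti.
have F_id : F (f i) (f j) = Phi f by rewrite /F !upd_id.
by rewrite -/(F (f j) (f i)) -F_id F_anti opprK.
Qed.

Lemma alt_form_upd_comb f k (I : Type) (s : seq I) (b : I -> R) (c : I -> 'I_n) :
  (forall i, c i != k) ->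
  Phi (upd f k (fun y => f k y + \sum_(i <- s) b i * f (c i) y)) = Phi f.
Proof.
move=> c_neq; rewrite -[RHS](congr1 Phi (upd_id f k)).
elim: s (f k) => [|i s IH] w.
  by congr (Phi (upd _ _ _)); apply: functional_extensionality => y; rewrite big_nil addr0.
have -> : (fun y => w y + \sum_(j <- i :: s) b j * f (c j) y)
    = (fun y => b i * f (c i) y + (w y + \sum_(j <- s) b j * f (c j) y)).
  by apply: functional_extensionality => y; rewrite big_cons addrCA.
rewrite (alt_formZD PhiA) IH (alt_form_eq0 PhiA (c_neq i)) ?mulr0 ?add0r //.
by rewrite upd_at upd_out.
Qed.

End AltFormTheory.

Lemma alt_form_ins n (Phi : ('I_n.+1 -> R -> R) -> R) v h (k : 'I_n.+1) :
  alt_form Phi -> Phi (ins k v h) = (-1) ^+ k * Phi (ins ord0 v h).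
Proof.
move=> PhiA; have [m k_val] : exists m, k = m :> nat by exists k.
rewrite k_val; elim: m k k_val => [|m IH] k k_val.
  by rewrite expr0 mul1r; congr (Phi (ins _ _ _)); apply: val_inj.
have m_lt : (m < n)%N by rewrite -ltnS -k_val ltn_ord.
have -> : k = lift ord0 (Ordinal m_lt) by apply: val_inj; rewrite /= k_val.
rewrite ins_liftS (alt_form_swap PhiA); last first.
  by apply/eqP => /(congr1 (@nat_of_ord _)); rewrite lift_max lift0; apply: n_Sn.
by rewrite (IH _ (lift_max (Ordinal m_lt))) exprS mulN1r mulNr.
Qed.

Definition extend n (g : R -> R) (F : 'I_n -> R -> R) : 'I_n.+1 -> R -> R :=
  ins ord_max g (fun j y => y * F j y).

Lemma extend_upd n g (F : 'I_n -> R -> R) k u :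
  extend g (upd F k u) = upd (extend g F) (lift ord_max k) (fun y => y * u y).
Proof.
apply: functional_extensionality => j; rewrite /extend.
case: (unliftP ord_max j) => [j'|] ->.
  rewrite ins_lift; case: (eqVneq j' k) => [->|j'k]; first by rewrite !upd_at.
  by rewrite !upd_out ?ins_lift // (inj_eq (@lift_inj _ _)).
by rewrite upd_out ?ins_at // neq_lift.
Qed.

Lemma alt_form_extend n g (Phi : ('I_n.+1 -> R -> R) -> R) :
  alt_form Phi -> alt_form (fun F => Phi (extend g F)).
Proof.
move=> PhiA; split=> [F k c v w|F i j ij Fij].
  rewrite !extend_upd -(alt_formZD PhiA); congr (Phi (upd _ _ _)).
  by apply: functional_extensionality => y; rewrite mulrDr mulrCA.
have ij' : lift ord_max i != lift ord_max j by rewrite (inj_eq (@lift_inj _ _)).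
by apply: (alt_form_eq0 PhiA ij'); rewrite /extend !ins_lift Fij.
Qed.

Lemma alt_form_extendD n (Phi : ('I_n.+1 -> R -> R) -> R) v w F :
  alt_form Phi ->
  Phi (extend (fun y => v y + w y) F) = Phi (extend v F) + Phi (extend w F).
Proof. by move=> PhiA; rewrite /extend {1}(ins_upd _ _ v) alt_formD // -!ins_upd. Qed.

Lemma alt_form_extend_comb n (Phi : ('I_n.+1 -> R -> R) -> R) g F (b : 'I_n -> R) :
  alt_form Phi ->
  Phi (extend (fun y => g y + \sum_j b j * (y * F j y)) F) = Phi (extend g F).
Proof.
move=> PhiA; have lift_neq (j : 'I_n) : lift ord_max j != ord_max :> 'I_n.+1.
  by rewrite eq_sym neq_lift.
rewrite -[RHS](alt_form_upd_comb PhiA (extend g F) (index_enum 'I_n) b lift_neq).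
rewrite /extend -ins_upd ins_at; congr (Phi (ins _ _ _)).
apply: functional_extensionality => y; congr (_ + _).
by apply: eq_bigr => j _; rewrite ins_lift.
Qed.

End AlternatingForms.

(** * The alternating sum over P_n *)

Section HookMonomials.
Variable R : comPzRingType.

Definition hmon n j (y : R) := y ^+ (n - j) * (1 + y ^+ 2) ^+ j.

(* With E n := 1 + y ^+ (2 * n), E (n + 2) = (1 + y ^+ 2) E (n + 1) - y ^+ 2 E n. *)
Lemma one_add_exp2_hmon n : exists c : nat -> R,
  c n.+1 = 1 /\ forall y, 1 + y ^+ (2 * n.+1) = \sum_(j < n.+2) c j * hmon n.+1 j y.
Proof.
pose P m := exists c : nat -> R,
  c m.+1 = 1 /\ forall y, 1 + y ^+ (2 * m.+1) = \sum_(j < m.+2) c j * hmon m.+1 j y.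
suff PP : P n /\ P n.+1 by case: PP.
elim: n => [|n [[c [c1 Ec]] [d [d1 Ed]]]].
  split.
    exists (fun j => (j == 1)%:R); split=> // y.
    by rewrite !big_ord_recr big_ord0 /= /hmon; ring.
  exists (fun j => if j == 0 then -2 else (j == 2)%:R); split=> // y.
  by rewrite !big_ord_recr big_ord0 /= /hmon; ring.
split; first by exists d.
exists (fun j => (if j is j'.+1 then d j' else 0) - (if (j < n.+2)%N then c j else 0)).
split=> [|y]; first by rewrite ltnNge leqnSn /= subr0.
have shift_s : \sum_(j < n.+4) (if (j : nat) is j'.+1 then d j' else 0) * hmon n.+3 j y
               = (1 + y ^+ 2) * \sum_(j < n.+3) d j * hmon n.+2 j y.
  rewrite big_ord_recl mul0r add0r mulr_sumr; apply: eq_bigr => j _.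
  by rewrite /hmon lift0 subSS exprS; ring.
have shift_y2 : \sum_(j < n.+4) (if (j < n.+2)%N then c j else 0) * hmon n.+3 j y
                = y ^+ 2 * \sum_(j < n.+2) c j * hmon n.+1 j y.
  rewrite 2!big_ord_recr /= ltnn ltnNge leqnSn /= !mul0r !addr0 mulr_sumr.
  apply: eq_bigr => j _; rewrite ltn_ord /hmon /=.
  have -> : (n.+3 - j = (n.+1 - j).+2)%N by have := ltn_ord j; lia.
  by rewrite !exprS; ring.
under eq_bigr do rewrite mulrBl.
rewrite sumrB shift_s shift_y2 -Ed -Ec !mulnS !exprS !exprD; ring.
Qed.

End HookMonomials.

Section AlternatingPartitionSum.
Variable R : comPzRingType.

Definition pcols n (lam : 'I_n -> nat) : 'I_n -> R -> R :=
  fun j y => y ^+ (lam (rev_ord j) + j).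

Definition ucols n : 'I_n -> R -> R := fun j => @hmon R n.-1 j.
Arguments ucols : clear implicits.

Lemma rev_ord_lift0 n (j : 'I_n) : rev_ord (lift ord0 j) = lift ord_max (rev_ord j).
Proof. by apply: val_inj; have := ltn_ord j; rewrite /= /bump; case: leqP; lia. Qed.

Lemma rev_ord_lift_max n (j : 'I_n) : rev_ord (lift ord_max j) = lift ord0 (rev_ord j).
Proof. by apply: val_inj; have := ltn_ord j; rewrite /= /bump; case: leqP; lia. Qed.

Lemma pcols_padp n (mu : 'I_n -> nat) :
  pcols (padp mu) = ins ord0 (fun=> 1) (fun j y => y * pcols mu j y).
Proof.
apply: functional_extensionality => j; apply: functional_extensionality => y.
rewrite /pcols /padp; case: (unliftP ord0 j) => [j'|] ->.
  by rewrite !ins_lift rev_ord_lift0 ins_lift lift0 addnS exprS.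
by rewrite !ins_at (_ : rev_ord ord0 = ord_max) ?ins_at //; apply: val_inj; rewrite /= subn1.
Qed.

Lemma pcols_hookp n (mu : 'I_n -> nat) :
  pcols (hookp mu) = extend (fun y => y ^+ (2 * n)) (pcols mu).
Proof.
apply: functional_extensionality => j; apply: functional_extensionality => y.
rewrite /pcols /hookp /extend; case: (unliftP ord_max j) => [j'|] ->.
  by rewrite !ins_lift rev_ord_lift_max ins_lift lift_max addSn exprS.
rewrite ins_at (_ : rev_ord ord_max = ord0) ?ins_at; last by apply: val_inj; rewrite /= subnn.
by rewrite mul2n -addnn.
Qed.

Lemma ucols_extend n : ucols n.+1 = extend (fun y => (1 + y ^+ 2) ^+ n) (ucols n).
Proof.
apply: functional_extensionality => j; apply: functional_extensionality => y.
rewrite /ucols /extend /hmon; case: (unliftP ord_max j) => [j'|] ->.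
  rewrite ins_lift lift_max mulrA -exprS /=.
  by congr (_ ^+ _ * _); have : (@nat_of_ord n j' < n)%N := ltn_ord j'; lia.
by rewrite /= ins_at subnn mul1r.
Qed.

Lemma alt_form_pad_hook n (Phi : ('I_n.+1 -> R -> R) -> R) (mu : 'I_n -> nat) :
  alt_form Phi ->
  (-1) ^+ (psize (padp mu))./2 * Phi (pcols (padp mu)) +
  (-1) ^+ (psize (hookp mu))./2 * Phi (pcols (hookp mu)) =
  (-1) ^+ n * ((-1) ^+ (psize mu)./2 *
                Phi (extend (fun y => 1 + y ^+ (2 * n)) (pcols mu))).
Proof.
move=> PhiA; rewrite psize_padp psize_hookp halfD odd_double andbF add0n doubleK.
rewrite pcols_padp pcols_hookp alt_form_extendD // exprD.
have rot := alt_form_ins (fun=> 1) (fun j y => y * pcols mu j y) ord_max PhiA.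
have -> : Phi (ins ord0 (fun=> 1) (fun j y => y * pcols mu j y))
          = (-1) ^+ n * Phi (extend (fun=> 1) (pcols mu)).
  by rewrite /extend rot mulrA -exprD -signr_odd oddD addbb expr0 mul1r.
ring.
Qed.

Lemma alt_form_ucols_span n (Phi : ('I_n.+2 -> R -> R) -> R) :
  alt_form Phi ->
  Phi (extend (fun y => 1 + y ^+ (2 * n.+1)) (ucols n.+1)) = Phi (ucols n.+2).
Proof.
move=> PhiA; have [c [c1 Ec]] := @one_add_exp2_hmon R n.
have -> : (fun y => 1 + y ^+ (2 * n.+1))
          = (fun y => (1 + y ^+ 2) ^+ n.+1 + \sum_(j < n.+1) c j * (y * ucols n.+1 j y)).
  apply: functional_extensionality => y; rewrite Ec big_ord_recr /= c1 mul1r addrC.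
  rewrite /hmon subnn mul1r; congr (_ + _); apply: eq_bigr => j _.
  by rewrite /ucols /hmon /= subSn 1?exprS ?mulrA // -ltnS.
by rewrite (alt_form_extend_comb _ _ (fun j : 'I_n.+1 => c j)) // (ucols_extend n.+1).
Qed.

Lemma alt_form_partition_sum n (Phi : ('I_n -> R -> R) -> R) :
  alt_form Phi ->
  \sum_(lam : {ffun 'I_n -> 'I_n} | inP (parts lam))
     (-1) ^+ (psize (parts lam))./2 * Phi (pcols (parts lam))
  = (-1) ^+ 'C(n, 2) * Phi (ucols n).
Proof.
have small m (Psi : ('I_m -> R -> R) -> R) : (m <= 1)%N ->
    \sum_(lam : {ffun 'I_m -> 'I_m} | inP (parts lam))
       (-1) ^+ (psize (parts lam))./2 * Psi (pcols (parts lam))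
    = (-1) ^+ 'C(m, 2) * Psi (ucols m).
  move=> m_le1.
  rewrite (big_inP_le1 (fun lam => (-1) ^+ (psize lam)./2 * Psi (pcols lam))) //.
  rewrite /psize big1 // bin_small ?(leq_ltn_trans m_le1) // !expr0 !mul1r.
  congr Psi; apply: functional_extensionality => j; apply: functional_extensionality => y.
  have j0 : j = 0 :> nat by have := ltn_ord j; lia.
  rewrite /pcols /ucols /hmon j0 (_ : m.-1 = 0%N) ?expr0 ?mulr1 //; lia.
elim: n Phi => [|[|n] IH] Phi PhiA; try exact: small.
rewrite (big_inP_split (fun lam => (-1) ^+ (psize lam)./2 * Phi (pcols lam))).
under eq_bigr do rewrite alt_form_pad_hook //.
rewrite -mulr_sumr (IH _ (alt_form_extend _ PhiA)) alt_form_ucols_span // mulrA -exprD.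
by rewrite [in RHS]binS bin1 addnC.
Qed.

End AlternatingPartitionSum.
Arguments ucols {R} n.

(** * Block Vandermonde determinants *)

Section ColumnDeterminants.
Variable R : comPzRingType.

Lemma alt_form_det N m (c : 'I_m -> 'I_N) (w x : 'I_N -> R)
    (M : ('I_m -> R -> R) -> 'M[R]_N) :
  injective c ->
  (forall f i s, M f i (c s) = w i * f s (x i)) ->
  (forall f g i j, (forall s, c s != j) -> M f i j = M g i j) ->
  alt_form (fun f => \det (M f)).
Proof.
move=> c_inj M_c M_out.
have M_upd f k u u' i j : j != c k -> M (upd f k u) i j = M (upd f k u') i j.
  have [s /eqP <-|no_s] := pickP (fun s => c s == j); last first.
    by move=> _; apply: M_out => s; rewrite no_s.
  by rewrite (inj_eq c_inj) => sk; rewrite !M_c !upd_out.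
split=> [f k c0 v u|f i j ij fij]; rewrite -!(det_tr (M _)).
  rewrite -[X in _ + X]mul1r.
  apply: (determinant_multilinear (i0 := c k)).
  - by apply/rowP => i; rewrite !mxE !M_c !upd_at; ring.
  - by apply/matrixP => r i; rewrite !mxE; apply: M_upd; rewrite eq_sym neq_lift.
  - by apply/matrixP => r i; rewrite !mxE; apply: M_upd; rewrite eq_sym neq_lift.
apply: (determinant_alternate (i1 := c i) (i2 := c j)); first by rewrite (inj_eq c_inj).
by move=> r; rewrite !mxE !M_c fij.
Qed.

End ColumnDeterminants.

Section BlockVandermonde.
Variables (R : comNzRingType) (p q : nat) (x a : 'I_(p + q) -> R).

Definition block_vmx (F : 'I_p -> R -> R) (G : 'I_q -> R -> R) : 'M[R]_(p + q) :=
  \matrix_(i, j) match split j with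
                 | inl j' => F j' (x i)
                 | inr k => a i * G k (x i)
                 end.

Lemma alt_form_block_vmxl G : alt_form (fun F => \det (block_vmx F G)).
Proof.
apply: (alt_form_det (M := block_vmx ^~ G) (c := lshift q) (w := fun=> 1) (x := x))
  => [||F F' i j no_s].
- exact: lshift_inj.
- by move=> F i s; rewrite mxE (unsplitK (inl _ s)) mul1r.
- rewrite !mxE; case: split_ordP => [j' eq_j|//].
  by have /eqP := no_s j'; rewrite eq_j.
Qed.

Lemma alt_form_block_vmxr F : alt_form (fun G => \det (block_vmx F G)).
Proof.
apply: (alt_form_det (M := block_vmx F) (c := @rshift p q) (w := a) (x := x))
  => [||G G' i j no_s].
- exact: rshift_inj.
- by move=> G i s; rewrite mxE (unsplitK (inr _ s)).
- rewrite !mxE; case: split_ordP => [//|k eq_j].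
  by have /eqP := no_s k; rewrite eq_j.
Qed.

Lemma Vmat_block_vmx (lam : 'I_p -> nat) (mu : 'I_q -> nat) :
  Vmat lam mu x a = block_vmx (pcols lam) (pcols mu).
Proof. by apply/matrixP => i j; rewrite !mxE; case: split. Qed.

Lemma Umat_block_vmx : Umat x a = block_vmx (ucols p) (ucols q).
Proof.
apply/matrixP => i j; rewrite !mxE /ucols /hmon !subn1.
by case: split => k //=; rewrite mulrA.
Qed.

Lemma Ffun_Umat : Ffun x a = (-1) ^+ ('C(p, 2) + 'C(q, 2)) * \det (Umat x a).
Proof.
rewrite /Ffun; under eq_bigr => lam lam_P.
  under eq_bigr => mu _ do
    rewrite Vmat_block_vmx halfD (negPf (inP_psize_even lam_P)) add0n exprD -mulrA.
  rewrite -mulr_sumr (alt_form_partition_sum (alt_form_block_vmxr _)) mulrCA.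
  over.
rewrite -mulr_sumr (alt_form_partition_sum (alt_form_block_vmxl _)).
by rewrite Umat_block_vmx mulrA -exprD addnC.
Qed.

End BlockVandermonde.

Lemma hmon_add_inv (F : fieldType) (y : F) m j : y != 0 -> (j <= m)%N ->
  y ^+ m * (y + y^-1) ^+ j = hmon m j y.
Proof.
move=> y_neq0 jm; rewrite /hmon -{1}(subnK jm) exprD -mulrA -exprMn.
by rewrite mulrDr mulfV // -expr2 addrC.
Qed.

Lemma Umat_diag_V0 (F : fieldType) p q (x a : 'I_(p + q) -> F) :
  (forall i, x i != 0) ->
  Umat x a = diag_mx (\row_i x i ^ (p%:Z - 1))
               *m V0 (fun i => x i + (x i)^-1) (fun i => a i * x i ^ (q%:Z - p%:Z)).
Proof.
move=> x_neq0; rewrite Umat_block_vmx mul_diag_mx; apply/matrixP => i j.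
rewrite !mxE /ucols; case: split_ordP => [j' _|k _] /=.
  have -> : (p%:Z - 1 = p.-1)%R by have := ltn_ord j'; lia.
  by rewrite -exprnP hmon_add_inv // -ltnS prednK // (leq_ltn_trans _ (ltn_ord j')).
set t := (x i + (x i)^-1) ^+ _; rewrite (_ : x i ^ (p%:Z - 1) * (a i * x i ^ (q%:Z - p%:Z) * t)
                = a i * (x i ^ (p%:Z - 1 + (q%:Z - p%:Z)) * t)); last first.
  by rewrite (expfzDr (p%:Z - 1)) // -!mulrA mulrCA.
rewrite {}/t add0n.
have -> : (p%:Z - 1 + (q%:Z - p%:Z) = q.-1)%R by have := ltn_ord k; lia.
by rewrite -exprnP hmon_add_inv // -ltnS prednK // (leq_ltn_trans _ (ltn_ord k)).
Qed.

Unset Implicit Arguments.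

Theorem mainTheorem5 (R : fieldType) (p q : nat) (x a : 'I_(p + q) -> R)
  (hx : forall i, x i != 0) :
  Ffun x a =
    (-1) ^+ ('C(p, 2) + 'C(q, 2))%N * (\prod_i x i ^ (p%:Z - 1))
      * \det (V0 (fun i => x i + (x i)^-1) (fun i => a i * x i ^ (q%:Z - p%:Z)))
  /\ Ffun x a = (-1) ^+ ('C(p, 2) + 'C(q, 2))%N * \det (Umat x a).
Proof.
split; last exact: Ffun_Umat.
rewrite Ffun_Umat (Umat_diag_V0 a hx) det_mulmx det_diag mulrA.
by under eq_bigr do rewrite mxE.
Qed.
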